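(* For each $m\ge1$, the sequence $(v_{k;m})_{k\ge0}$ is bounded above by $b=v_{k;0}$, is strictly decreasing in $k$, and converges to $b/(m+1)$ as $k\to\infty$.
   Context: Fix $b\ge2$ and $d\in\{0,\dots,b-1\}$. A string is a finite sequence $X=(d_l,\dots,d_1)$ of digits in $\{0,\dots,b-1\}$ (leading zeros allowed), of length $|X|=l\ge0$; its value is $n(X)=\sum_{i=1}^{l}d_ib^{i-1}$ ($0$ for the empty string). For $k\ge0$, $\mu_k=\sum_{X}b^{-|X|}\delta_{n(X)/b^{|X|}}$, the sum over all strings $X$ containing $d$ exactly $k$ times; it is a finite measure on $[0,1)$ of total mass $b$. The complementary moments are $v_{k;m}=\int_{[0,1)}(1-x)^m\,d\mu_k(x)$. *)

From HB Require Import structures.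
From mathcomp Require Import all_boot all_order all_algebra.
From mathcomp Require Import all_classical all_reals all_analysis.
Set Implicit Arguments. Unset Strict Implicit. Unset Printing Implicit Defensive.
Import Order.TTheory GRing.Theory Num.Theory.
Import numFieldNormedType.Exports.
Local Open Scope ring_scope.

(* A string of length l over digits {0,..,b-1} is an l-tuple X of 'I_b;
   X`_0 is the leftmost (most significant) digit d_l, X`_(l-1) is d_1.
   Its value n(X) = sum_{i=1}^l d_i b^(i-1). *)
Definition nval (b l : nat) (X : l.-tuple 'I_b) : nat :=
  (\sum_(i < l) (tnth X i : nat) * b ^ (l - 1 - i))%N.

Definition dcount (b d l : nat) (X : l.-tuple 'I_b) : nat :=
  count (fun x : 'I_b => (x : nat) == d) X.

(* Complementary moment v_{k;m} = \int_[0,1) (1-x)^m dmu_k(x), where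
   mu_k = sum_X b^{-|X|} delta_{n(X)/b^{|X|}} over strings with exactly k
   digits d.  Integrating against this countable sum of weighted Dirac
   masses gives the series below (grouped by length l). *)
Definition vterm (R : realType) (b d k m : nat) (l : nat) : R :=
  \sum_(X : l.-tuple 'I_b | dcount d X == k)
     (b%:R ^+ l)^-1 * (1 - (nval X)%:R / b%:R ^+ l) ^+ m.

Definition vmom (R : realType) (b d k m : nat) : R :=
  limn (series (vterm R b d k m)).

From HB Require Import structures.
From mathcomp Require Import all_boot all_order all_algebra.
From mathcomp Require Import all_classical all_reals all_analysis.
From mathcomp Require Import zify ring lra.
Import Order.TTheory GRing.Theory Num.Theory.
Import numFieldNormedType.Exports.
Local Open Scope classical_set_scope.
Local Open Scope ring_scope.
Set Implicit Arguments. Unset Strict Implicit. Unset Printing Implicit Defensive.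

(* The value 1 - x of a string X = c :: Y is (b - 1 - c + (1 - x(Y))) / b, so expanding
   ((b - 1 - c + t) / b)^j binomially and summing over the length turns the moments into
   the solution of a triangular linear recursion in (k, j):
     b^(j+1) v_{k;j} = [k = 0] b^(j+1) + sum_(c <> d) sum_(i <= j) C(j,i) (b-1-c)^(j-i) v_{k;i}
                       + [k > 0] sum_(i <= j) C(j,i) (b-1-d)^(j-i) v_{k-1;i}.
   At j = 0 it forces v_{k;0} = b. The gaps v_{k;j} - v_{k+1;j} satisfy the same
   recursion with a positive source term, hence are positive for j >= 1 by induction on
   k and j. Letting k -> oo, the limits satisfy the recursion over all b digits, whose
   unique solution with value b at j = 0 is b / (j + 1), because
   sum_c ((b - c)^(j+1) - (b - 1 - c)^(j+1)) telescopes to b^(j+1). *)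

Lemma big_tuple_cons (V : nmodType) (T : finType) (l : nat) (F : l.+1.-tuple T -> V) :
  \sum_(X : l.+1.-tuple T) F X = \sum_(c : T) \sum_(Y : l.-tuple T) F [tuple of c :: Y].
Proof.
rewrite pair_big /= (reindex (fun p : T * l.-tuple T => [tuple of p.1 :: p.2])) //=.
exists (fun X : l.+1.-tuple T => (thead X, [tuple of behead X])) => [[c Y] _|X _] /=.
  by rewrite theadE; congr pair; apply: val_inj.
by rewrite -tuple_eta.
Qed.

Lemma cvg_sumr (R : realType) (I : Type) (r : seq I) (P : pred I)
    (F : I -> nat -> R) (l : I -> R) :
  (forall i, P i -> F i n @[n --> \oo] --> l i) ->
  \sum_(i <- r | P i) F i n @[n --> \oo] --> \sum_(i <- r | P i) l i.
Proof. by move=> cvgF; apply: cvg_big => //; exact: add_continuous. Qed.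

Section strings.
Variables (b d : nat).

Lemma nval_cons l (c : 'I_b) (Y : l.-tuple 'I_b) :
  nval [tuple of c :: Y] = (c * b ^ l + nval Y)%N.
Proof.
rewrite /nval big_ord_recl subn0 subSS subn0; congr addn.
apply: eq_bigr => i _; rewrite (tnthS c Y i); congr (_ * b ^ _)%N.
by rewrite -subnDA add1n.
Qed.

Lemma dcount_cons l (c : 'I_b) (Y : l.-tuple 'I_b) :
  dcount d [tuple of c :: Y] = ((c == d :> nat) + dcount d Y)%N.
Proof. by []. Qed.

Lemma nval_lt l (X : l.-tuple 'I_b) : (nval X < b ^ l)%N.
Proof.
elim: l X => [|l IH] X; first by rewrite /nval big_ord0.
rewrite (tuple_eta X) nval_cons expnS.
have := IH [tuple of behead X]; have := ltn_ord (thead X).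
move: (nval _) (thead X : nat) => n c hc hn.
apply: (@leq_trans (c.+1 * b ^ l)); first by rewrite mulSn addnC ltn_add2r.
by rewrite leq_mul2r hc orbT.
Qed.

End strings.

Section moments.
Variables (R : realType) (b d : nat).
Hypotheses (hb : (2 <= b)%N) (hd : (d < b)%N).

Local Notation B := (b%:R : R).

Definition dist_one l (X : l.-tuple 'I_b) : R := 1 - (nval X)%:R / B ^+ l.

(* The integral of [F (1 - x)] against the part of mu_k carried by strings of length l. *)
Definition layer k l (F : R -> R) : R :=
  \sum_(X : l.-tuple 'I_b | dcount d X == k) (B ^+ l)^-1 * F (dist_one X).

Definition cdigit (c : nat) : R := (b - c.+1)%:R.

Definition binom_shift (x : R) j (V : nat -> R) : R :=
  \sum_(i < j.+1) 'C(j, i)%:R * x ^+ (j - i) * V i.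

(* The effect on the moments of prepending one digit; only the digit d raises k. *)
Definition prepend k (V : nat -> nat -> R) j : R :=
  \sum_(c < b | (c : nat) != d) binom_shift (cdigit c) j (V k)
  + (if k is k'.+1 then binom_shift (cdigit d) j (V k') else 0).

Lemma B_gt0 : 0 < B.
Proof. by rewrite ltr0n; lia. Qed.

Lemma B_ge0 : 0 <= B.
Proof. exact: ltW B_gt0. Qed.

Lemma B_neq0 : B != 0.
Proof. exact: lt0r_neq0 B_gt0. Qed.

Lemma expB_gt0 l : 0 < B ^+ l.
Proof. exact: exprn_gt0 B_gt0. Qed.

Lemma expB_neq0 l : B ^+ l != 0.
Proof. exact: lt0r_neq0 (expB_gt0 l). Qed.

Lemma cdigit_ge0 c : 0 <= cdigit c.
Proof. exact: ler0n. Qed.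

Lemma cdigitE c : (c < b)%N -> cdigit c = B - 1 - c%:R.
Proof. by move=> cb; rewrite /cdigit natrB // -natr1; ring. Qed.

Lemma dist_one_cons l (c : 'I_b) (Y : l.-tuple 'I_b) :
  dist_one [tuple of c :: Y] = (cdigit c + dist_one Y) / B.
Proof.
rewrite /dist_one nval_cons natrD natrM natrX cdigitE //.
by rewrite exprS; field; rewrite B_neq0 expB_neq0.
Qed.

Lemma dist_one_gt0 l (X : l.-tuple 'I_b) : 0 < dist_one X.
Proof.
by rewrite subr_gt0 ltr_pdivrMr ?expB_gt0 // mul1r -natrX ltr_nat nval_lt.
Qed.

Lemma dist_one_le1 l (X : l.-tuple 'I_b) : dist_one X <= 1.
Proof. by rewrite lerBlDr lerDl divr_ge0 // ltW ?expB_gt0. Qed.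

Lemma sum_neq_d_const (a : R) : \sum_(c < b | (c : nat) != d) a = (B - 1) * a.
Proof.
rewrite (eq_bigl (predC1 (Ordinal hd))) => [|c]; last by rewrite /= -val_eqE.
rewrite sumr_const cardC1 card_ord -[b.-1]subn1 -[LHS]mulr_natr natrB 1?mulrC //; lia.
Qed.

Lemma layer_nil k F : layer k 0 F = (k == 0%N)%:R * F 1.
Proof.
rewrite /layer big_mkcond (bigD1 [tuple]) //= big1 ?addr0; last first.
  by move=> X /negP[]; rewrite tuple0.
rewrite /dist_one /nval big_ord0 expr0 invr1 mul0r subr0 mul1r eq_sym.
by case: (k == 0)%N; rewrite ?mul1r ?mul0r.
Qed.

Lemma layer_succ k l F :
  layer k l.+1 F = B^-1 *
    (\sum_(c < b | (c : nat) != d) layer k l (fun t => F ((cdigit c + t) / B))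
     + (if k is k'.+1 then layer k' l (fun t => F ((cdigit d + t) / B)) else 0)).
Proof.
rewrite /layer big_mkcond big_tuple_cons (bigD1 (Ordinal hd)) //= addrC mulrDr.
have cons_term (c : 'I_b) (Y : l.-tuple 'I_b) :
    (B ^+ l.+1)^-1 * F (dist_one [tuple of c :: Y])
    = B^-1 * ((B ^+ l)^-1 * F ((cdigit c + dist_one Y) / B)).
  by rewrite dist_one_cons exprS invfM mulrA.
congr (_ + _).
  rewrite mulr_sumr; apply: eq_big => [c|c]; first by rewrite -val_eqE.
  rewrite -val_eqE /= => cd; rewrite mulr_sumr [RHS]big_mkcond.
  apply: eq_bigr => Y _; rewrite dcount_cons (negbTE cd) add0n.
  by case: ifP => // _; rewrite cons_term.
case: k => [|k]; first by rewrite mulr0 big1 // => Y _; rewrite dcount_cons eqxx.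
rewrite mulr_sumr [RHS]big_mkcond; apply: eq_bigr => Y _.
by rewrite dcount_cons eqxx add1n eqSS; case: ifP => // _; rewrite cons_term.
Qed.

Lemma layer_sum k l (I : Type) (r : seq I) (P : pred I) (f : I -> R -> R) :
  layer k l (fun t => \sum_(i <- r | P i) f i t) = \sum_(i <- r | P i) layer k l (f i).
Proof. by rewrite /layer exchange_big; apply: eq_bigr => X _; rewrite mulr_sumr. Qed.

Lemma layerMl k l a f : layer k l (fun t => a * f t) = a * layer k l f.
Proof. by rewrite /layer mulr_sumr; apply: eq_bigr => X _; rewrite mulrCA. Qed.

Lemma layerB k l f g : layer k l (fun t => f t - g t) = layer k l f - layer k l g.
Proof. by rewrite /layer -sumrB; apply: eq_bigr => X _; rewrite mulrBr. Qed.

Lemma ler_layer k l f g :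
  (forall t, 0 < t <= 1 -> f t <= g t) -> layer k l f <= layer k l g.
Proof.
move=> fg; apply: ler_sum => X _; rewrite ler_pM2l ?invr_gt0 ?expB_gt0 //.
by apply: fg; rewrite dist_one_gt0 dist_one_le1.
Qed.

Lemma layer_ge0 k l f : (forall t, 0 < t <= 1 -> 0 <= f t) -> 0 <= layer k l f.
Proof.
move=> f0; have -> : 0 = layer k l (fun=> 0) by rewrite /layer big1 // => X; rewrite mulr0.
exact: ler_layer.
Qed.

Lemma layer_vterm k j l : layer k l (fun t => t ^+ j) = vterm R b d k j l.
Proof. by []. Qed.

Lemma layer_shift k l x j :
  layer k l (fun t => ((x + t) / B) ^+ j)
  = (B ^+ j)^-1 * binom_shift x j (fun i => vterm R b d k i l).
Proof.
under eq_fun do rewrite expr_div_n exprDn mulrC.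
rewrite layerMl layer_sum; congr (_ * _); apply: eq_bigr => i _.
by under eq_fun do rewrite -mulr_natl mulrA; rewrite layerMl layer_vterm.
Qed.

Lemma vterm_nil k j : vterm R b d k j 0 = (k == 0%N)%:R.
Proof. by rewrite -layer_vterm layer_nil expr1n mulr1. Qed.

Lemma vterm_succ k j l :
  vterm R b d k j l.+1 = (B ^+ j.+1)^-1 * prepend k (fun k i => vterm R b d k i l) j.
Proof.
rewrite -layer_vterm layer_succ exprS invfM -mulrA; congr (_ * _).
rewrite mulrDr mulr_sumr; congr (_ + _).
  by apply: eq_bigr => c _; rewrite layer_shift.
by case: k => [|k]; rewrite ?mulr0 // layer_shift.
Qed.

Lemma vterm_ge0 k j l : 0 <= vterm R b d k j l.
Proof.
by rewrite -layer_vterm; apply: layer_ge0 => t /andP[/ltW t0 _]; exact: exprn_ge0.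
Qed.

Lemma vterm_le_mass k j l : vterm R b d k j l <= vterm R b d k 0%N l.
Proof.
rewrite -!layer_vterm; apply: ler_layer => t /andP[/ltW t0 t1].
by rewrite expr0 exprn_ile1.
Qed.

Lemma binom_shift0 x V : binom_shift x 0%N V = V 0%N.
Proof. by rewrite /binom_shift big_ord1 bin0 expr0 !mul1r. Qed.

Lemma binom_shift_recr x j V :
  binom_shift x j V = V j + \sum_(i < j) 'C(j, i)%:R * x ^+ (j - i) * V i.
Proof. by rewrite /binom_shift big_ord_recr /= binn subnn expr0 !mul1r addrC. Qed.

Lemma binom_shift_rest_ge0 (x : R) j (V : nat -> R) :
  0 <= x -> (forall i, (i < j)%N -> 0 <= V i) ->
  0 <= \sum_(i < j) 'C(j, i)%:R * x ^+ (j - i) * V i.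
Proof.
move=> x_ge0 V_ge0; apply: sumr_ge0 => i _.
by rewrite mulr_ge0 ?V_ge0 // mulr_ge0 ?ler0n ?exprn_ge0.
Qed.

Lemma binom_shiftMl a x j V : binom_shift x j (fun i => a * V i) = a * binom_shift x j V.
Proof. by rewrite /binom_shift mulr_sumr; apply: eq_bigr => i _; rewrite mulrCA. Qed.

Lemma binom_shift_sum x j (I : Type) (r : seq I) (P : pred I) (V : I -> nat -> R) :
  binom_shift x j (fun i => \sum_(s <- r | P s) V s i)
  = \sum_(s <- r | P s) binom_shift x j (V s).
Proof. by rewrite /binom_shift exchange_big; apply: eq_bigr => i _; rewrite mulr_sumr. Qed.

Lemma binom_shiftB x j V U :
  binom_shift x j (fun i => V i - U i) = binom_shift x j V - binom_shift x j U.
Proof. by rewrite /binom_shift -sumrB; apply: eq_bigr => i _; rewrite mulrBr. Qed.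

Lemma binom_shift_cvg x j (V : nat -> nat -> R) L :
  (forall i, V n i @[n --> \oo] --> L i) ->
  binom_shift x j (V n) @[n --> \oo] --> binom_shift x j L.
Proof. by move=> cvgV; apply: cvg_sumr => i _; exact: cvgMl_tmp. Qed.

Lemma prepend_sum k j (I : Type) (r : seq I) (P : pred I) (V : I -> nat -> nat -> R) :
  prepend k (fun k i => \sum_(s <- r | P s) V s k i) j
  = \sum_(s <- r | P s) prepend k (V s) j.
Proof.
rewrite /prepend /= big_split /=; congr (_ + _).
  by under eq_bigr do rewrite binom_shift_sum; rewrite exchange_big.
by case: k => [|k] /=; [rewrite big1 | exact: binom_shift_sum].
Qed.

Lemma prepend_cvg k j (V : nat -> nat -> nat -> R) L :
  (forall k i, V n k i @[n --> \oo] --> L k i) ->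
  prepend k (V n) j @[n --> \oo] --> prepend k L j.
Proof.
move=> cvgV; apply: cvgD; first by apply: cvg_sumr => c _; exact: binom_shift_cvg.
by case: k => [|k]; [exact: cvg_cst | exact: binom_shift_cvg].
Qed.

Lemma prepend_mass k V :
  prepend k V 0%N = (B - 1) * V k 0%N + (if k is k'.+1 then V k' 0%N else 0).
Proof.
rewrite /prepend -sum_neq_d_const; under eq_bigr do rewrite binom_shift0.
by case: k => [|k]; rewrite ?binom_shift0.
Qed.

Local Notation psum k j := (series (vterm R b d k j)).

Lemma psum_succ k j N :
  psum k j N.+1 = (k == 0%N)%:R + (B ^+ j.+1)^-1 * prepend k (fun k i => psum k i N) j.
Proof.
rewrite /series /= big_nat_recl // vterm_nil; congr (_ + _).
by under eq_bigr do rewrite vterm_succ; rewrite -mulr_sumr -prepend_sum.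
Qed.

Lemma psum_mass_bound k N : psum k 0%N N <= B.
Proof.
have B2 : 2 <= B by rewrite ler_nat.
have divB_le x y : x <= B * y -> B^-1 * x <= y.
  by move=> xy; rewrite mulrC ler_pdivrMr ?B_gt0 // mulrC.
elim: N k => [|N IH] k; first by rewrite /series /= big_geq ?ler0n.
rewrite psum_succ prepend_mass expr1; case: k => [|k] /=.
  suff : B^-1 * ((B - 1) * psum 0%N 0%N N) <= B - 1 by rewrite addr0; lra.
  by apply: divB_le; have := IH 0%N; nra.
rewrite add0r; apply: divB_le; have := IH k; have := IH k.+1; nra.
Qed.

Lemma psum_le_mass k j N : psum k j N <= psum k 0%N N.
Proof. by apply: ler_sum => l _; exact: vterm_le_mass. Qed.

Lemma psum_nondecreasing k j : nondecreasing_seq (psum k j).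
Proof. by apply: nondecreasing_series => n _ _; exact: vterm_ge0. Qed.

Lemma psum_cvg k j : cvgn (psum k j).
Proof.
apply: nondecreasing_is_cvgn; first exact: psum_nondecreasing.
by exists B => _ [n _ <-]; exact: le_trans (psum_le_mass _ _ _) (psum_mass_bound _ _).
Qed.

Lemma vmom_rec k j :
  vmom R b d k j = (k == 0%N)%:R + (B ^+ j.+1)^-1 * prepend k (vmom R b d) j.
Proof.
have cvg_vmom : psum k j N.+1 @[N --> \oo] --> vmom R b d k j.
  by rewrite (cvg_shiftS (psum k j)); exact: psum_cvg.
rewrite -(cvg_lim (@Rhausdorff R) cvg_vmom); apply: (cvg_lim (@Rhausdorff R)).
under eq_fun do rewrite psum_succ.
apply: cvgD; first exact: cvg_cst.
by apply: cvgMl_tmp; apply: prepend_cvg => k' i; exact: psum_cvg.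
Qed.

Lemma vmom_rec_succ k j :
  vmom R b d k.+1 j = (B ^+ j.+1)^-1 * prepend k.+1 (vmom R b d) j.
Proof. by rewrite vmom_rec add0r. Qed.

Lemma vmom_ge0 k j : 0 <= vmom R b d k j.
Proof.
have := nondecreasing_cvgn_le (psum_nondecreasing k j) (@psum_cvg k j) 0.
by rewrite /series /= big_geq.
Qed.

Lemma vmom_le_mass k j : vmom R b d k j <= vmom R b d k 0%N.
Proof.
by apply: (lim_series_le (@psum_cvg k j) (@psum_cvg k 0%N)) => n; exact: vterm_le_mass.
Qed.

Lemma vmom_mass k : vmom R b d k 0%N = B.
Proof.
have B_mul_rec k' : B * vmom R b d k' 0%N
    = B * (k' == 0%N)%:R + (B - 1) * vmom R b d k' 0%N
      + (if k' is k''.+1 then vmom R b d k'' 0%N else 0).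
  by rewrite {1}vmom_rec prepend_mass expr1 mulrDr mulVKf ?B_neq0 // addrA.
elim: k => [|k IH]; [have := B_mul_rec 0%N | have := B_mul_rec k.+1; rewrite IH] => /=; lra.
Qed.

Definition vgap k j := vmom R b d k j - vmom R b d k.+1 j.

Lemma vgap_mass k : vgap k 0%N = 0.
Proof. by rewrite /vgap !vmom_mass subrr. Qed.

Lemma vgap_rec k j : vgap k.+1 j = (B ^+ j.+1)^-1 * prepend k.+1 vgap j.
Proof.
rewrite /vgap !vmom_rec_succ -mulrBr /prepend; congr (_ * _).
by under [in RHS]eq_bigr do rewrite binom_shiftB; rewrite binom_shiftB sumrB; ring.
Qed.

Lemma vgap0_rec j : vgap 0 j = (B ^+ j.+1)^-1 *
  (\sum_(c < b | (c : nat) != d) binom_shift (cdigit c) j (vgap 0)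
   + (B ^+ j.+1 - binom_shift (cdigit d) j (vmom R b d 0%N))).
Proof.
rewrite /vgap vmom_rec_succ (vmom_rec 0%N) /prepend /=.
have cB : (B ^+ j.+1)^-1 * B ^+ j.+1 = 1 by rewrite mulVf ?expB_neq0.
under [in RHS]eq_bigr do rewrite binom_shiftB.
by rewrite sumrB -{1}cB; ring.
Qed.

Lemma recursion_gt0 j (V : nat -> R) T :
  (forall i, (i < j)%N -> 0 <= V i) -> 0 < T ->
  V j = (B ^+ j.+1)^-1 * (\sum_(c < b | (c : nat) != d) binom_shift (cdigit c) j V + T) ->
  0 < V j.
Proof.
move=> V_ge0 T_gt0 Vj.
pose r := \sum_(c < b | (c : nat) != d) \sum_(i < j) 'C(j, i)%:R * cdigit c ^+ (j - i) * V i.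
have r_ge0 : 0 <= r.
  by apply: sumr_ge0 => c _; apply: binom_shift_rest_ge0 => //; exact: cdigit_ge0.
have B_le : B <= B ^+ j.+1 by rewrite exprS ler_peMr ?ler0n // exprn_ege1 // ler1n; lia.
(* V j enters the right-hand side with total coefficient (b - 1) / b^(j+1) < 1. *)
have : B ^+ j.+1 * V j = (B - 1) * V j + r + T.
  rewrite {1}Vj mulVKf ?expB_neq0 // -sum_neq_d_const -big_split /=.
  by congr (_ + _); apply: eq_bigr => c _; rewrite binom_shift_recr.
move: B_le; set x := B ^+ j.+1; nra.
Qed.

Lemma shift_defect_ge0 j t : 0 <= t <= 1 -> 0 <= 1 - ((cdigit d + t) / B) ^+ j.
Proof.
move=> /andP[t_ge0 t_le1]; rewrite subr_ge0 exprn_ile1 //.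
  by rewrite divr_ge0 ?addr_ge0 ?cdigit_ge0 // B_ge0.
rewrite ler_pdivrMr ?B_gt0 // mul1r cdigitE //; have := ler0n R d; lra.
Qed.

Lemma shift_defect_gt0 j t : (0 < j)%N -> 0 <= t < d.+1%:R ->
  0 < 1 - ((cdigit d + t) / B) ^+ j.
Proof.
move=> j_gt0 /andP[t_ge0 t_lt]; rewrite subr_gt0 expr_lt1 //; last first.
  by rewrite divr_ge0 ?addr_ge0 ?cdigit_ge0 // B_ge0.
by rewrite ltr_pdivrMr ?B_gt0 // mul1r cdigitE //; move: t_lt; rewrite -natr1; lra.
Qed.

Lemma layer_shift_defect_gt0 j : (0 < j)%N ->
  0 < layer 0 1 (fun t => 1 - ((cdigit d + t) / B) ^+ j).
Proof.
move=> j_gt0; rewrite layer_succ /= addr0 pmulr_rgt0 ?invr_gt0 ?B_gt0 //.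
under eq_bigr do rewrite layer_nil mul1r.
have c0_lt : ((if d == 0%N then 1 else 0) < b)%N by case: ifP; lia.
pose c0 := Ordinal c0_lt.
have c0_neq : (c0 : nat) != d by rewrite /=; case: ifP => /eqP; lia.
rewrite (bigD1 c0) //=.
have dist_lt : (cdigit c0 + 1) / B < d.+1%:R.
  rewrite ltr_pdivrMr ?B_gt0 // cdigitE // -natr1.
  have := ler0n R d; have B2 : 2 <= B by rewrite ler_nat.
  by rewrite /c0 /=; case: ifP => [/eqP ->|/negbT]; [|rewrite -lt0n -(ler_nat R)]; nra.
have term_gt0 := shift_defect_gt0 j_gt0 (t := (cdigit c0 + 1) / B).
have rest_ge0 : 0 <= \sum_(c < b | ((c : nat) != d) && (c != c0))
    (1 - ((cdigit d + (cdigit c + 1) / B) / B) ^+ j).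
  apply: sumr_ge0 => c _; apply: shift_defect_ge0.
  rewrite divr_ge0 ?addr_ge0 ?cdigit_ge0 ?ler01 ?B_ge0 //=.
  by rewrite ler_pdivrMr ?B_gt0 // mul1r cdigitE //; have := ler0n R c; lra.
suff : 0 < 1 - ((cdigit d + (cdigit c0 + 1) / B) / B) ^+ j by lra.
by apply: term_gt0; rewrite dist_lt divr_ge0 ?addr_ge0 ?cdigit_ge0 ?ler01 ?B_ge0.
Qed.

(* The difference with b^(j+1) is b^j times a series of nonnegative layers whose
   length-one layer is positive. *)
Lemma binom_shift_vmom0_lt j : (0 < j)%N ->
  binom_shift (cdigit d) j (vmom R b d 0%N) < B ^+ j.+1.
Proof.
move=> j_gt0; set x := cdigit d.
pose g l := layer 0 l (fun t => 1 - ((x + t) / B) ^+ j).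
have g_ge0 l : 0 <= g l.
  by apply: layer_ge0 => t /andP[/ltW t0 t1]; apply: shift_defect_ge0; rewrite t0.
have g1_gt0 : 0 < g 1%N := layer_shift_defect_gt0 j_gt0.
have gE l : g l = vterm R b d 0 0 l
                  - (B ^+ j)^-1 * binom_shift x j (fun i => vterm R b d 0 i l).
  by rewrite /g layerB layer_shift.
have cvg_g : series g @ \oo --> B - (B ^+ j)^-1 * binom_shift x j (vmom R b d 0%N).
  have -> : series g
      = fun N => psum 0 0 N - (B ^+ j)^-1 * binom_shift x j (fun i => psum 0 i N).
    apply: funext => N; rewrite /series /=; under eq_bigr do rewrite gE.
    by rewrite sumrB -mulr_sumr -binom_shift_sum.
  rewrite -(vmom_mass 0); apply: cvgB; first exact: psum_cvg.
  by apply: cvgMl_tmp; apply: binom_shift_cvg => i; exact: psum_cvg.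
have lim_ge : g 0%N + g 1%N <= B - (B ^+ j)^-1 * binom_shift x j (vmom R b d 0%N).
  rewrite -(cvg_lim (@Rhausdorff R) cvg_g).
  have -> : g 0%N + g 1%N = series g 2 by rewrite /series /= big_nat_recr //= big_nat1.
  by apply: nondecreasing_cvgn_le; [apply: nondecreasing_series => n _ _; exact: g_ge0|
    apply/cvg_ex; exists (B - (B ^+ j)^-1 * binom_shift x j (vmom R b d 0%N))].
have := g_ge0 0%N; rewrite -[binom_shift _ _ _](mulVKf (expB_neq0 j)) exprSr.
by rewrite ltr_pM2l ?expB_gt0 // => g0_ge0; lra.
Qed.

Lemma vgap_gt0 k j : (0 < j)%N -> 0 < vgap k j.
Proof.
elim: k j => [|k IHk] j; elim/ltn_ind: j => j IHj j_gt0.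
  apply: (recursion_gt0 (T := B ^+ j.+1 - binom_shift (cdigit d) j (vmom R b d 0%N))).
  - by move=> [|i] ij; [rewrite vgap_mass | exact/ltW/IHj].
  - by rewrite subr_gt0 binom_shift_vmom0_lt.
  - exact: vgap0_rec.
apply: (recursion_gt0 (T := binom_shift (cdigit d) j (vgap k))).
- by move=> [|i] ij; [rewrite vgap_mass | exact/ltW/IHj].
- rewrite binom_shift_recr; apply: ltr_pwDl; first exact: IHk.
  apply: binom_shift_rest_ge0; first exact: cdigit_ge0.
  by move=> [|i] ij; [rewrite vgap_mass | exact/ltW/IHk].
- exact: vgap_rec.
Qed.

Lemma vgap_ge0 k j : 0 <= vgap k j.
Proof. by case: j => [|j]; [rewrite vgap_mass | exact/ltW/vgap_gt0]. Qed.

Lemma vmom_nonincreasing j : nonincreasing_seq (fun k => vmom R b d k j).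
Proof. by apply/nonincreasing_seqP => k; rewrite -subr_ge0; exact: vgap_ge0. Qed.

Lemma vmom_cvg j : cvgn (fun k => vmom R b d k j).
Proof.
apply: nonincreasing_is_cvgn; first exact: vmom_nonincreasing.
by exists 0 => _ [k _ <-]; exact: vmom_ge0.
Qed.

Definition vlim j := limn (fun k => vmom R b d k j).

Lemma vlim_rec j : B ^+ j.+1 * vlim j = \sum_(c < b) binom_shift (cdigit c) j vlim.
Proof.
have cvg_succ i : vmom R b d k.+1 i @[k --> \oo] --> vlim i.
  by rewrite (cvg_shiftS (fun k => vmom R b d k i)); exact: vmom_cvg.
rewrite -(cvg_lim (@Rhausdorff R) (cvg_succ j)).
rewrite (cvg_lim (@Rhausdorff R) (_ : _ --> (B ^+ j.+1)^-1 *
   (\sum_(c < b | (c : nat) != d) binom_shift (cdigit c) j vlim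
    + binom_shift (cdigit d) j vlim))).
  rewrite mulVKf ?expB_neq0 // [RHS](bigD1 (Ordinal hd)) //= addrC.
  by congr (_ + _); apply: eq_bigl => c; rewrite -val_eqE.
under eq_fun do rewrite vmom_rec_succ.
apply: cvgMl_tmp; apply: cvgD; first by apply: cvg_sumr => c _; exact: binom_shift_cvg.
by apply: binom_shift_cvg => i; exact: vmom_cvg.
Qed.

Lemma digit_recursion_unique V U :
  (forall j, B ^+ j.+1 * V j = \sum_(c < b) binom_shift (cdigit c) j V) ->
  (forall j, B ^+ j.+1 * U j = \sum_(c < b) binom_shift (cdigit c) j U) ->
  V 0%N = U 0%N -> forall j, V j = U j.
Proof.
move=> recV recU VU0 j; elim/ltn_ind: j => -[//|j] IH.
have split_top W : \sum_(c < b) binom_shift (cdigit c) j.+1 W = B * W j.+1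
    + \sum_(c < b) \sum_(i < j.+1) 'C(j.+1, i)%:R * cdigit c ^+ (j.+1 - i) * W i.
  under eq_bigr do rewrite binom_shift_recr.
  by rewrite big_split /= sumr_const card_ord mulr_natl.
have same_rest : \sum_(c < b) \sum_(i < j.+1) 'C(j.+1, i)%:R * cdigit c ^+ (j.+1 - i) * V i
    = \sum_(c < b) \sum_(i < j.+1) 'C(j.+1, i)%:R * cdigit c ^+ (j.+1 - i) * U i.
  by apply: eq_bigr => c _; apply: eq_bigr => i _; rewrite IH.
have B_lt : B < B ^+ j.+2.
  by rewrite exprS ltr_pMr ?B_gt0 // exprn_egt1 // ltr1n.
have := recV j.+1; have := recU j.+1; rewrite !split_top same_rest.
move: B_lt; set x := B ^+ j.+2; set r := \sum_(c < b) _; nra.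
Qed.

Lemma binom_shift_harmonic x j :
  binom_shift x j (fun i => (i.+1%:R)^-1) = ((x + 1) ^+ j.+1 - x ^+ j.+1) / j.+1%:R.
Proof.
rewrite exprDn big_ord_recl subn0 expr0 mulr1 bin0 mulr1n (addrC (x ^+ j.+1)) addrK.
rewrite mulr_suml; apply: eq_bigr => i _.
rewrite expr1n mulr1 (_ : (lift ord0 i : nat) = i.+1) // subSS -[x ^+ _ *+ _]mulr_natr.
have S_neq0 n : (1 + n%:R : R) != 0 by rewrite addrC natr1 pnatr_eq0.
have := mul_bin_diag j.+1 i => /(congr1 (fun n => n%:R : R)); rewrite /= !natrM => binE.
have -> : ('C(j.+1, i.+1)%:R : R) = j.+1%:R * 'C(j, i)%:R / i.+1%:R.
  by rewrite binE; field; rewrite S_neq0.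
by field; rewrite !S_neq0.
Qed.

Lemma sum_binom_shift_harmonic j :
  \sum_(c < b) binom_shift (cdigit c) j (fun i => (i.+1%:R)^-1) = B ^+ j.+1 / j.+1%:R.
Proof.
under eq_bigr do rewrite binom_shift_harmonic; rewrite -mulr_suml; congr (_ / _).
rewrite (reindex_inj rev_ord_inj) /=.
transitivity (\sum_(0 <= c < b) ((c.+1%:R : R) ^+ j.+1 - c%:R ^+ j.+1)).
  rewrite big_mkord; apply: eq_bigr => c _; rewrite /cdigit natr1.
  by congr (_%:R ^+ _ - _%:R ^+ _); have := ltn_ord c; lia.
by rewrite (telescope_sumr (fun c => c%:R ^+ j.+1)) // expr0n subr0.
Qed.

Lemma vlim_eq j : vlim j = B / j.+1%:R.
Proof.
apply: (digit_recursion_unique (U := fun i => B / i.+1%:R) vlim_rec) => [i|].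
  under eq_bigr do rewrite binom_shiftMl.
  by rewrite -mulr_sumr sum_binom_shift_harmonic mulrCA.
by rewrite /vlim; under eq_fun do rewrite vmom_mass; rewrite (lim_cst (@Rhausdorff R)) divr1.
Qed.

End moments.

Theorem mainTheorem17 (R : realType) (b d : nat) (hb : (2 <= b)%N) (hd : (d < b)%N)
  (m : nat) (hm : (1 <= m)%N) :
  (forall k : nat, vmom R b d k 0 = b%:R) /\
  (forall k : nat, vmom R b d k m <= b%:R) /\
  (forall k : nat, vmom R b d k.+1 m < vmom R b d k m) /\
  ((fun k : nat => vmom R b d k m) @ \oo --> (b%:R / (m.+1)%:R : R)).
Proof.
split; first by move=> k; exact: (vmom_mass R hb hd k).
split; first by move=> k; rewrite -(vmom_mass R hb hd k); exact: vmom_le_mass.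
split; first by move=> k; rewrite -subr_gt0; exact: (vgap_gt0 R hb hd k hm).
by rewrite -(vlim_eq R hb hd m); exact: (@vmom_cvg R b d hb hd m).
Qed.
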